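(* Let $\mathbf A$ be a pseudo-Kleene lattice. Then $\mathbf A$ is super-paraorthomodular if and only if $\mathbf A$ has no subalgebra isomorphic to $\mathbf B_6$, no subalgebra isomorphic to $\mathbf B_8$, and no subalgebra $\mathbf B$ admitting a congruence $\theta$ such that $\mathbf B/\theta\cong\mathbf B_8^*$ or $\mathbf B/\theta\cong\mathbf B_{10}$.
   Context: A pseudo-Kleene lattice is an algebra $(A,\land,\lor,{}',0,1)$ that is a bounded lattice with an antitone involution ${}'$ ($x\leq y\Rightarrow y'\leq x'$, $x''=x$) satisfying $x\land x'\leq y\lor y'$; subalgebras and congruences are with respect to $\land,\lor,{}',0,1$. It is super-paraorthomodular if for all $x,y$: (SP1) $x\leq y$ and $x'\land y=(x\land x')\lor(y\land y')$ imply $y\land(x\lor x')=x\lor(y\land y')$; (SP2) $x\leq y$ implies $(x\land x')\lor(y\land y')=(x'\land y)\land(x'\land y)'$. In all the following finite pseudo-Kleene lattices the involution maps $u\leftrightarrow u'$ and $0\leftrightarrow 1$, and the order is given by covering relations. $\mathbf B_6$: elements $0,x,y,y',x',1$ with $0\prec x\prec y\prec 1$ and $0\prec y'\prec x'\prec 1$. $\mathbf B_8$: elements $0,z',x,y,y',x',z,1$ with $0\prec z'$, $z'\prec x\prec y\prec z$, $z'\prec y'\prec x'\prec z$, $z\prec 1$. $\mathbf B_8^*$: elements $0,x,y,z,z',y',x',1$ with $0\prec x$, $0\prec y$, $x\prec z$, $y\prec z'$, $z\prec z'$, $z\prec y'$, $z'\prec x'$, $y'\prec 1$, $x'\prec 1$.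 $\mathbf B_{10}$: elements $0,x,y',m,a,a',x',y,m',1$ with $0\prec y'$, $0\prec m$, $0\prec x$, $y'\prec a'$, $m\prec a'$, $m\prec a$, $x\prec a$, $a'\prec x'$, $a'\prec m'$, $a\prec m'$, $a\prec y$, $x'\prec 1$, $m'\prec 1$, $y\prec 1$. *)

From mathcomp Require Import all_boot.
Set Implicit Arguments. Unset Strict Implicit. Unset Printing Implicit Defensive.

Record alg := Alg {
  acar :> Type;
  ameet : acar -> acar -> acar;
  ajoin : acar -> acar -> acar;
  ainv  : acar -> acar;
  abot  : acar;
  atop  : acar }.

Section AlgDefs.
Variable A : alg.
Local Notation "x ∧ y" := (ameet x y) (at level 40, left associativity).
Local Notation "x ∨ y" := (ajoin x y) (at level 50, left associativity).
Local Notation "x '" := (ainv x) (at level 2).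

Definition ale (x y : A) : Prop := x ∧ y = x.

Definition pseudo_kleene : Prop :=
  [/\ (forall x y : A, x ∧ y = y ∧ x), (forall x y : A, x ∨ y = y ∨ x),
      (forall x y z : A, x ∧ (y ∧ z) = (x ∧ y) ∧ z),
      (forall x y z : A, x ∨ (y ∨ z) = (x ∨ y) ∨ z) &
      (forall x y : A, x ∧ (x ∨ y) = x /\ x ∨ (x ∧ y) = x)] /\
  [/\ (forall x : A, ale (abot A) x), (forall x : A, ale x (atop A)),
      (forall x : A, x '' = x),
      (forall x y : A, ale x y -> ale (y ') (x ')) &
      (forall x y : A, ale (x ∧ x ') (y ∨ y '))].

Definition super_paraorthomodular : Prop :=
  (forall x y : A, ale x y -> x ' ∧ y = (x ∧ x ') ∨ (y ∧ y ') ->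
       y ∧ (x ∨ x ') = x ∨ (y ∧ y ')) /\
  (forall x y : A, ale x y ->
       (x ∧ x ') ∨ (y ∧ y ') = (x ' ∧ y) ∧ (x ' ∧ y) ').

Definition subalgebra (S : A -> Prop) : Prop :=
  [/\ forall x y, S x -> S y -> S (x ∧ y),
      forall x y, S x -> S y -> S (x ∨ y),
      forall x, S x -> S (x '), S (abot A) & S (atop A)].

Definition sub_iso (S : A -> Prop) (C : alg) : Prop :=
  exists f : C -> A,
    [/\ injective f, (forall a, S a <-> exists c, f c = a),
        (forall c d, f (ameet c d) = f c ∧ f d),
        (forall c d, f (ajoin c d) = f c ∨ f d) &
        [/\ (forall c, f (ainv c) = (f c) '),
            f (abot C) = abot A & f (atop C) = atop A]].

Definition has_subalgebra_iso (C : alg) : Prop :=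
  exists S, subalgebra S /\ sub_iso S C.

Definition congruence (S : A -> Prop) (th : A -> A -> Prop) : Prop :=
  [/\ (forall x, S x -> th x x),
      (forall x y, S x -> S y -> th x y -> th y x),
      (forall x y z, S x -> S y -> S z -> th x y -> th y z -> th x z),
      (forall x y u v, S x -> S y -> S u -> S v -> th x y -> th u v ->
          th (x ∧ u) (y ∧ v) /\ th (x ∨ u) (y ∨ v)) &
      (forall x y, S x -> S y -> th x y -> th (x ') (y '))].

(* (S)/th is isomorphic to C: presented as g = iso ∘ (canonical projection),
   i.e. a surjective homomorphism S -> C whose kernel is exactly th *)
Definition quot_iso (S : A -> Prop) (th : A -> A -> Prop) (C : alg) : Prop :=
  exists g : A -> C,
    [/\ (forall x y, S x -> S y -> (g x = g y <-> th x y)),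
        (forall c, exists x, S x /\ g x = c),
        (forall x y, S x -> S y -> g (x ∧ y) = ameet (g x) (g y)),
        (forall x y, S x -> S y -> g (x ∨ y) = ajoin (g x) (g y)) &
        [/\ (forall x, S x -> g (x ') = ainv (g x)),
            g (abot A) = abot C & g (atop A) = atop C]].

End AlgDefs.

Section FinLat.
Variable n : nat.   (* elements are 0, 1, ..., n *)
Variable covers : seq (nat * nat).
Definition elems : seq nat := iota 0 n.+1.
(* reflexive-transitive closure of the covering relation:
   the elements above x are those reachable from x in at most n cover steps *)
Definition fstep (R : seq nat) : seq nat :=
  undup (R ++ [seq c.2 | c <- covers & c.1 \in R]).
Definition fle (x y : nat) : bool := y \in iter n fstep [:: x].
Definition fmeetn (x y : nat) : nat :=
  nth 0 [seq z <- elems | [&& fle z x, fle z y &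
                  all (fun w => (fle w x && fle w y) ==> fle w z) elems]] 0.
Definition fjoinn (x y : nat) : nat :=
  nth 0 [seq z <- elems | [&& fle x z, fle y z &
                  all (fun w => (fle x w && fle y w) ==> fle z w) elems]] 0.
Definition fmeet (x y : 'I_n.+1) : 'I_n.+1 := inord (fmeetn x y).
Definition fjoin (x y : 'I_n.+1) : 'I_n.+1 := inord (fjoinn x y).
(* elements are listed so that the involution is i |-> n - i *)
Definition finalg : alg :=
  @Alg 'I_n.+1 fmeet fjoin (@rev_ord n.+1) ord0 ord_max.
End FinLat.

(* B6: 0=0, 1=x, 2=y, 3=y', 4=x', 5=1 *)
Definition B6 : alg :=
  finalg 5 [:: (0,1); (1,2); (2,5); (0,3); (3,4); (4,5)].

(* B8: 0=0, 1=z', 2=x, 3=y, 4=y', 5=x', 6=z, 7=1 *)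
Definition B8 : alg :=
  finalg 7 [:: (0,1); (1,2); (2,3); (3,6); (1,4); (4,5); (5,6); (6,7)].

(* B8*: 0=0, 1=x, 2=y, 3=z, 4=z', 5=y', 6=x', 7=1 *)
Definition B8s : alg :=
  finalg 7 [:: (0,1); (0,2); (1,3); (2,4); (3,4); (3,5); (4,6); (5,7); (6,7)].

(* B10: 0=0, 1=x, 2=y', 3=m, 4=a, 5=a', 6=m', 7=y, 8=x', 9=1 *)
Definition B10 : alg :=
  finalg 9 [:: (0,2); (0,3); (0,1); (2,5); (3,5); (3,4); (1,4); (5,8); (5,6);
               (4,6); (4,7); (8,9); (6,9); (7,9)].

(* If SP1 fails at x <= y, put a := (x ∧ x') ∨ (y ∧ y'), u := x ∨ (y ∧ y') and
   v := y ∧ (x ∨ x').  Then a <= u < v <= a', every meet of u or v with u' or v' lies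
   below a, and 0, a, u, v, v', u', a', 1 form a subalgebra isomorphic to B8, or to
   B6 when a = 0.  If SP2 fails, the quotients come from a map phi from A to the
   finite algebra C (B8* or B10) sending s to the join of the labels of those of
   finitely many chosen elements that lie below s.  It preserves meets and 1 and
   satisfies phi s <= (phi s')', so S := {s | phi s' = (phi s)'} is a subalgebra on
   which phi is a homomorphism, and phi maps S onto C.  The target is B8* when the
   law (u <= v, u <= u' => v ∧ (u ∨ v') <= u ∨ (v ∧ v')) fails and B10 when it holds.
   Conversely SP1 and SP2 pass to subalgebras and SP2, being an identity, to
   quotients, while SP1 fails in B6 and B8 and SP2 fails in B8* and B10.  All the
   facts about the four finite algebras are checked by evaluation. *)

From mathcomp Require Import all_boot.
From Stdlib Require Import Classical ClassicalEpsilon.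
Set Implicit Arguments. Unset Strict Implicit. Unset Printing Implicit Defensive.

Local Notation "x ∧ y" := (ameet x y) (at level 40, left associativity).
Local Notation "x ∨ y" := (ajoin x y) (at level 50, left associativity).
Local Notation "x '" := (ainv x) (at level 2).
Local Notation "x ≤ y" := (ale x y) (at level 70, no associativity).

(** * Pseudo-Kleene lattices *)

Section PseudoKleeneLattice.
Variables (A : alg) (PK : pseudo_kleene A).
Implicit Types x y z : A.

Lemma meetC x y : x ∧ y = y ∧ x. Proof. by case: PK => [[]]. Qed.
Lemma joinC x y : x ∨ y = y ∨ x. Proof. by case: PK => [[]]. Qed.
Lemma meetA x y z : x ∧ (y ∧ z) = x ∧ y ∧ z. Proof. by case: PK => [[]]. Qed.
Lemma joinA x y z : x ∨ (y ∨ z) = x ∨ y ∨ z. Proof. by case: PK => [[]]. Qed.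
Lemma meetKU x y : x ∧ (x ∨ y) = x. Proof. by case: PK => [[_ _ _ _ /(_ x y)[]]]. Qed.
Lemma joinKI x y : x ∨ (x ∧ y) = x. Proof. by case: PK => [[_ _ _ _ /(_ x y)[]]]. Qed.
Lemma invK x : x '' = x. Proof. by case: PK => [_ []]. Qed.
Lemma le_inv x y : x ≤ y -> y ' ≤ x '. Proof. by case: PK => [_ [_ _ _ + _]]; apply. Qed.
Lemma le0x x : abot A ≤ x. Proof. by case: PK => [_ []]. Qed.
Lemma lex1 x : x ≤ atop A. Proof. by case: PK => [_ []]. Qed.
Lemma kleene x y : x ∧ x ' ≤ y ∨ y '. Proof. by case: PK => [_ [_ _ _ _]]; apply. Qed.

Lemma meetxx x : x ∧ x = x. Proof. by rewrite -{2}(joinKI x x) meetKU. Qed.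
Lemma lexx x : x ≤ x. Proof. exact: meetxx. Qed.
Lemma le_trans x y z : x ≤ y -> y ≤ z -> x ≤ z.
Proof. by rewrite /ale => xy yz; rewrite -xy -meetA yz. Qed.
Lemma le_anti x y : x ≤ y -> y ≤ x -> x = y.
Proof. by rewrite /ale => xy yx; rewrite -xy meetC yx. Qed.
Lemma leEjoin x y : x ≤ y <-> x ∨ y = y.
Proof. by rewrite /ale; split=> <-; rewrite ?meetKU // joinC meetC joinKI. Qed.
Lemma leIl x y : x ∧ y ≤ x. Proof. by rewrite /ale meetC meetA meetxx. Qed.
Lemma leIr x y : x ∧ y ≤ y. Proof. by rewrite meetC; apply: leIl. Qed.
Lemma leUl x y : x ≤ x ∨ y. Proof. exact: meetKU. Qed.
Lemma leUr x y : y ≤ x ∨ y. Proof. by rewrite joinC; apply: leUl. Qed.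
Lemma lexI x y z : z ≤ x -> z ≤ y -> z ≤ x ∧ y.
Proof. by rewrite /ale => zx zy; rewrite meetA zx zy. Qed.
Lemma lexIP x y z : z ≤ x ∧ y <-> z ≤ x /\ z ≤ y.
Proof.
split=> [zxy | [zx zy]]; last exact: lexI.
by split; apply: le_trans zxy _; [apply: leIl | apply: leIr].
Qed.
Lemma leUx x y z : x ≤ z -> y ≤ z -> x ∨ y ≤ z.
Proof. by move=> /leEjoin xz /leEjoin yz; apply/leEjoin; rewrite -joinA yz xz. Qed.
Lemma leUxP x y z : x ∨ y ≤ z <-> x ≤ z /\ y ≤ z.
Proof.
split=> [xyz | [xz yz]]; last exact: leUx.
by split; apply: le_trans _ xyz; [apply: leUl | apply: leUr].
Qed.
Lemma leIxl x y z : x ≤ z -> x ∧ y ≤ z. Proof. exact/le_trans/leIl. Qed.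
Lemma leIxr x y z : y ≤ z -> x ∧ y ≤ z. Proof. exact/le_trans/leIr. Qed.
Lemma lexUl x y z : z ≤ x -> z ≤ x ∨ y. Proof. by move/le_trans; apply; apply: leUl. Qed.
Lemma lexUr x y z : z ≤ y -> z ≤ x ∨ y. Proof. by move/le_trans; apply; apply: leUr. Qed.

Lemma leI2 x1 x2 y1 y2 : x1 ≤ x2 -> y1 ≤ y2 -> x1 ∧ y1 ≤ x2 ∧ y2.
Proof. by move=> ? ?; apply: lexI; [apply: leIxl | apply: leIxr]. Qed.

Lemma le_inv2 x y : (y ' ≤ x ') <-> (x ≤ y).
Proof. by split=> [/le_inv|/le_inv //]; rewrite !invK. Qed.
Lemma invI x y : (x ∧ y) ' = x ' ∨ y '.
Proof.
apply: le_anti; last by apply: leUx; apply: le_inv; [apply: leIl | apply: leIr].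
by apply/le_inv2; rewrite invK; apply: lexI; apply/le_inv2; rewrite invK;
  [apply: leUl | apply: leUr].
Qed.
Lemma invU x y : (x ∨ y) ' = x ' ∧ y '.
Proof. by rewrite -{1}(invK x) -{1}(invK y) -invI invK. Qed.
Lemma inv0 : (abot A) ' = atop A.
Proof. by apply: le_anti; [apply: lex1 | apply/le_inv2; rewrite invK; apply: le0x]. Qed.
Lemma inv1 : (atop A) ' = abot A. Proof. by rewrite -inv0 invK. Qed.

Lemma le_join_map (T : eqType) (f : T -> A) l k :
  k \in l -> f k ≤ foldr (@ajoin A) (abot A) (map f l).
Proof.
elim: l => [|i l IH] //=; rewrite inE => /orP[/eqP-> | /IH]; first exact: leUl.
exact: lexUr.
Qed.

Lemma join_map_le (T : eqType) (f : T -> A) l z :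
  (forall k, k \in l -> f k ≤ z) -> foldr (@ajoin A) (abot A) (map f l) ≤ z.
Proof.
elim: l => [|i l IH] /= fl; first exact: le0x.
apply: leUx; first by apply: fl; rewrite mem_head.
by apply: IH => k kl; apply: fl; rewrite inE kl orbT.
Qed.

End PseudoKleeneLattice.

(* Proof search for lattice inequalities from the hypotheses in context, by
   iterative deepening: the invertible rules (join on the left, meet on the right)
   first, then transitivity through a hypothesis sharing a side with the goal, then
   the four projections.  Involutions are pushed to the atoms beforehand and
   hypotheses are split into their meet/join components. *)
Ltac lattice_search PK n :=
  lazymatch n with
  | O => fail
  | S ?m =>
    first
    [ apply: (lexx PK) | apply: (le0x PK) | apply: (lex1 PK) | assumption
    | lazymatch goal with
      | |- ale (ajoin _ _) _ => apply: (leUx PK); [lattice_search PK n | lattice_search PK n]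
      | |- ale _ (ameet _ _) => apply: (lexI PK); [lattice_search PK n | lattice_search PK n]
      | |- _ =>
        first
        [ match goal with
          | H : ale ?x _ |- ale ?x _ => apply: (le_trans PK H); lattice_search PK m
          | H : ale _ ?z |- ale _ ?z => apply: (le_trans PK _ H); lattice_search PK m
          end
        | apply: (leIxl PK); lattice_search PK m
        | apply: (leIxr PK); lattice_search PK m
        | apply: (lexUl PK); lattice_search PK m
        | apply: (lexUr PK); lattice_search PK m ]
      end ]
  end.

Ltac split_le_hyps PK :=
  repeat match goal with
  | H : ale (ajoin _ _) _ |- _ => have [? ?] := (leUxP PK _ _ _).1 H; clear H
  | H : ale _ (ameet _ _) |- _ => have [? ?] := (lexIP PK _ _ _).1 H; clear H
  end.

Ltac lattice := match goal with PK : pseudo_kleene _ |- _ =>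
  rewrite ?(invU PK, invI PK, invK PK); split_le_hyps PK;
  first [ lattice_search PK 2 | lattice_search PK 3 | lattice_search PK 4
        | lattice_search PK 5 | lattice_search PK 6 ] end.

(** * The laws SP1 and SP2 and the finite algebras *)

Definition sp1_law (A : alg) : Prop :=
  forall x y : A, x ≤ y -> x ' ∧ y = (x ∧ x ') ∨ (y ∧ y ') ->
    y ∧ (x ∨ x ') = x ∨ (y ∧ y ').
Definition sp2_law (A : alg) : Prop :=
  forall x y : A, x ≤ y -> (x ∧ x ') ∨ (y ∧ y ') = (x ' ∧ y) ∧ (x ' ∧ y) '.

Lemma sub_iso_sp1 (A C : alg) : sp1_law A -> has_subalgebra_iso A C -> sp1_law C.
Proof.
move=> sp1 [S [_ [f [f_inj _ fI fU [fN _ _]]]]] x y xy hyp.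
apply: f_inj; rewrite fI !fU !fI !fN; apply: sp1; first by rewrite /ale -fI xy.
by rewrite -!fN -!fI -fU hyp.
Qed.

Lemma quot_iso_sp2 (A C : alg) (S : A -> Prop) (th : A -> A -> Prop) :
  pseudo_kleene A -> sp2_law A -> subalgebra S -> quot_iso S th C -> sp2_law C.
Proof.
move=> PK sp2 [SI SU SN _ _] [g [_ g_onto gI gU [gN _ _]]] x y.
have [s [Ss <-]] := g_onto x; have [t [St <-]] := g_onto y; rewrite /ale => xy.
have := congr1 g (sp2 _ _ (leIr PK s t)).
by rewrite !(gU, gI, gN) ?xy //; repeat first [apply: (SU) | apply: (SI) | apply: (SN)].
Qed.

Section FiniteAlgebra.
Variables (n : nat) (cv : seq (nat * nat)).
Local Notation C := (finalg n cv).
Local Notation E := (iota 0 n.+1).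

Definition meet_by (le : rel nat) (x y : nat) : nat :=
  nth 0 [seq z <- E | [&& le z x, le z y & all (fun w => le w x && le w y ==> le w z) E]] 0.
Definition join_by (le : rel nat) (x y : nat) : nat :=
  nth 0 [seq z <- E | [&& le x z, le y z & all (fun w => le x w && le y w ==> le z w) E]] 0.

(* Evaluating [fle] is slow, so computations read it from a table; [ftab] applies
   [lookup] to the table, so that a call-by-value evaluation builds it only once. *)
Definition lookup (T : seq (seq bool)) : rel nat := fun x y => nth false (nth [::] T x) y.
Definition ftab : rel nat := lookup [seq [seq fle n cv x y | y <- E] | x <- E].

Lemma mem_E (x : C) : (x : nat) \in E. Proof. by rewrite mem_iota ltn_ord. Qed.

Lemma ftabE : {in E &, ftab =2 fle n cv}.
Proof.
move=> x y; rewrite !mem_iota /= !add0n => xn yn.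
by rewrite /ftab /lookup (nth_map 0) ?size_iota // (nth_map 0) ?size_iota // !nth_iota.
Qed.

Lemma nth_filter_E (P : pred nat) : nth 0 [seq z <- E | P z] 0 < n.+1.
Proof.
case E': [seq z <- E | P z] => [//|z s] /=.
by have := mem_head z s; rewrite -E' mem_filter mem_iota => /andP[_].
Qed.

Lemma val_meet (x y : C) : ameet x y = meet_by ftab x y :> nat.
Proof.
rewrite /= /fmeet inordK ?nth_filter_E //; congr nth; apply: eq_in_filter => z zE.
rewrite !ftabE ?mem_E //; congr [&& _, _ & _]; apply: eq_in_all => w wE.
by rewrite !ftabE ?mem_E.
Qed.

Lemma val_join (x y : C) : ajoin x y = join_by ftab x y :> nat.
Proof.
rewrite /= /fjoin inordK ?nth_filter_E //; congr nth; apply: eq_in_filter => z zE.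
rewrite !ftabE ?mem_E //; congr [&& _, _ & _]; apply: eq_in_all => w wE.
by rewrite !ftabE ?mem_E.
Qed.

Lemma val_inv (x : C) : ainv x = n - x :> nat. Proof. by rewrite /= subSS. Qed.

Lemma finalg_leP (x y : C) : reflect (ale x y) (meet_by ftab x y == x).
Proof. by rewrite -val_meet; apply: (iffP eqP) => [/ord_inj | ->]. Qed.

Definition all_pairs (P : nat -> nat -> bool) : bool := all (fun x => all (P x) E) E.

Lemma all_pairsP P : all_pairs P -> forall x y : C, P x y.
Proof. by move=> /allP PE x y; apply: (allP (PE _ (mem_E x))); apply: mem_E. Qed.

Definition pseudo_kleene_check (le : rel nat) : bool :=
  let m := meet_by le in let j := join_by le in
  [&& all_pairs (fun x y => [&& m x y == m y x, j x y == j y x, m x (j x y) == x,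
                              j x (m x y) == x & (m x y == x) == le x y]),
      all_pairs (fun x y => ((m x y == x) ==> (m (n - y) (n - x) == n - y)) &&
                            (m (m x (n - x)) (j y (n - y)) == m x (n - x))),
      all (fun x => all_pairs (fun y z =>
             (m x (m y z) == m (m x y) z) && (j x (j y z) == j (j x y) z))) E &
      all (fun x => (m 0 x == 0) && (m x n == x)) E].

Definition finalg_check : bool := pseudo_kleene_check ftab.

Hypothesis check : finalg_check.

Lemma finalg_leE (x y : C) : ale x y <-> fle n cv x y.
Proof.
case/and4P: check => /all_pairsP/(_ x y)/and5P[_ _ _ _ /eqP le_meet] _ _ _.
rewrite -ftabE ?mem_E // -le_meet -val_meet; split=> [-> //|/eqP]; exact: val_inj.
Qed.

Lemma finalg_pseudo_kleene : pseudo_kleene C.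
Proof.
case/and4P: check => /all_pairsP L2 /all_pairsP O2 /allP L3 /allP L1.
have L3' (x y z : C) := all_pairsP (L3 _ (mem_E x)) y z.
have L1' (x : C) := L1 _ (mem_E x).
have eqv (x y : C) : x = y :> nat -> x = y by apply: ord_inj.
split; split.
- by move=> x y; apply: eqv; rewrite !val_meet; case/and5P: (L2 x y) => /eqP.
- by move=> x y; apply: eqv; rewrite !val_join; case/and5P: (L2 x y) => _ /eqP.
- by move=> x y z; apply: eqv; rewrite !val_meet; case/andP: (L3' x y z) => /eqP.
- by move=> x y z; apply: eqv; rewrite !val_join; case/andP: (L3' x y z) => _ /eqP.
- move=> x y; case/and5P: (L2 x y) => _ _ /eqP meetKU /eqP joinKI.
  by split; apply: eqv; rewrite ?val_meet ?val_join ?val_meet.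
- by move=> x; apply: eqv; rewrite val_meet; case/andP: (L1' x) => /eqP.
- by move=> x; apply: eqv; rewrite val_meet; case/andP: (L1' x) => _ /eqP.
- exact: rev_ordK.
- move=> x y /(congr1 (@nat_of_ord _)); rewrite val_meet => xy; apply: eqv.
  by rewrite val_meet !val_inv; case/andP: (O2 x y) => /implyP/(_ (introT eqP xy))/eqP.
- move=> x y; apply: eqv; rewrite !val_meet !val_join !val_inv.
  by case/andP: (O2 x y) => _ /eqP.
Qed.

End FiniteAlgebra.

Section FiniteCounterexamples.
Variables (n : nat) (cv : seq (nat * nat)).
Local Notation C := (finalg n cv).

Definition sp1_witness (le : rel nat) (x y : nat) : bool :=
  let m := meet_by n le in let j := join_by n le in
  [&& m x y == x, m (n - x) y == j (m x (n - x)) (m y (n - y))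
    & m y (j x (n - x)) != j x (m y (n - y))].

Definition sp2_witness (le : rel nat) (x y : nat) : bool :=
  let m := meet_by n le in let j := join_by n le in
  (m x y == x) && (j (m x (n - x)) (m y (n - y)) != m (m (n - x) y) (n - m (n - x) y)).

Let valE := (@val_meet n cv, @val_join n cv, @val_inv n cv).

Lemma finalg_not_sp1 x y : x <= n -> y <= n -> sp1_witness (ftab n cv) x y -> ~ sp1_law C.
Proof.
move=> xn yn /and3P[/eqP xy /eqP hyp /eqP neq] sp1; apply: neq.
have X : (inord x : C) = x :> nat by rewrite inordK.
have Y : (inord y : C) = y :> nat by rewrite inordK.
rewrite -X -Y -!valE; apply: (congr1 (@nat_of_ord _)); apply: sp1;
  by apply: ord_inj; rewrite !valE X Y.
Qed.

Lemma finalg_not_sp2 x y : x <= n -> y <= n -> sp2_witness (ftab n cv) x y -> ~ sp2_law C.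
Proof.
move=> xn yn /andP[/eqP xy /eqP neq] sp2; apply: neq.
have X : (inord x : C) = x :> nat by rewrite inordK.
have Y : (inord y : C) = y :> nat by rewrite inordK.
rewrite -X -Y -!valE; apply: (congr1 (@nat_of_ord _)); apply: sp2;
  by apply: ord_inj; rewrite !valE X Y.
Qed.

End FiniteCounterexamples.

Lemma B6_not_sp1 : ~ sp1_law B6.
Proof. by apply: (finalg_not_sp1 (x := 1) (y := 2)) => //; vm_compute. Qed.

Lemma B8_not_sp1 : ~ sp1_law B8.
Proof. by apply: (finalg_not_sp1 (x := 2) (y := 3)) => //; vm_compute. Qed.

Lemma B8s_not_sp2 : ~ sp2_law B8s.
Proof. by apply: (finalg_not_sp2 (x := 1) (y := 5)) => //; vm_compute. Qed.

Lemma B10_not_sp2 : ~ sp2_law B10.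
Proof. by apply: (finalg_not_sp2 (x := 1) (y := 7)) => //; vm_compute. Qed.

(** * Embeddings of B6 and B8 *)

Section CoverPaths.
Variables (n : nat) (cv : seq (nat * nat)).

Lemma fstepP R r : reflect (r \in R \/ exists2 c, (c, r) \in cv & c \in R) (r \in fstep cv R).
Proof.
rewrite /fstep mem_undup mem_cat; apply: (iffP orP) => -[-> | H]; try by left.
- by right; case/mapP: H => -[c d] /=; rewrite mem_filter /= => /andP[cR cd] ->; exists c.
- by right; case: H => c cr cR; apply/mapP; exists (c, r); rewrite // mem_filter cR.
Qed.

Lemma iter_fstep_sub k l R : k <= l -> {subset iter k (fstep cv) R <= iter l (fstep cv) R}.
Proof.
move=> /subnK <-; elim: (l - k) => [//|d IH] r /IH rR.
by rewrite addSn /=; apply/fstepP; left.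
Qed.

Lemma fle_ind x (P : nat -> Prop) :
  P x -> (forall c d, (c, d) \in cv -> P c -> P d) -> forall y, fle n cv x y -> P y.
Proof.
move=> Px step y; rewrite /fle; elim: n y => [|k IH] y /=; first by rewrite inE => /eqP->.
by case/fstepP => [/IH // | [c cy /IH]]; apply: step.
Qed.

Lemma fle_pred x y : fle n cv x y -> y = x \/ exists2 c, (c, y) \in cv & fle n cv x c.
Proof.
suff pred k : k <= n -> y \in iter k (fstep cv) [:: x] ->
    y = x \/ exists2 c, (c, y) \in cv & fle n cv x c by apply: pred (leqnn n).
elim: k y => [|k IH] y kn /=; first by rewrite inE => /eqP; left.
case/fstepP => [yk | [c cy ck]]; first exact: IH (ltnW kn) yk.
by right; exists c; last exact: iter_fstep_sub (ltnW kn) _ ck.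
Qed.

End CoverPaths.

Definition all_prop (T : Type) (P : T -> Prop) (s : seq T) : Prop :=
  foldr (fun x Q => P x /\ Q) True s.

Lemma all_propP (T : eqType) (P : T -> Prop) s : all_prop P s -> forall x, x \in s -> P x.
Proof. by elim: s => [|y s IH] //= [Py /IH Ps] x; rewrite inE => /orP[/eqP-> | /Ps]. Qed.

Definition incomparable_meets n cv : seq (nat * nat * nat) :=
  let le := ftab n cv in
  [seq t <- [seq (x, y, meet_by n le x y) | x <- iota 0 n.+1, y <- iota 0 n.+1]
     | ~~ le t.1.1 t.1.2 && ~~ le t.1.2 t.1.1].

Section FiniteEmbedding.
Variables (A : alg) (n : nat) (cv : seq (nat * nat)) (f : nat -> A).
Local Notation C := (finalg n cv).
Hypotheses (PK : pseudo_kleene A) (check : finalg_check n cv).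
Hypotheses (f0 : f 0 = abot A) (f_inv : forall i, i <= n -> f (n - i) = (f i) ').
Hypothesis f_cover : forall cd, cd \in cv -> f cd.1 ≤ f cd.2.
Hypothesis f_cover_sep : forall cd, cd \in cv -> ~ f cd.2 ≤ f cd.1.
Hypothesis f_incomparable :
  forall t, t \in incomparable_meets n cv -> f t.1.1 ∧ f t.1.2 ≤ f t.2.

Let PKC := finalg_pseudo_kleene check.
Let F (x : C) : A := f x.

Lemma fle_f_le a b : fle n cv a b -> f a ≤ f b.
Proof.
apply: (@fle_ind n cv a (fun y => f a ≤ f y)) => [|c d /f_cover cd ac].
  exact: lexx.
exact: (le_trans PK ac cd).
Qed.

Lemma F_mono (x y : C) : x ≤ y -> F x ≤ F y.
Proof. by move/(finalg_leE check); apply: fle_f_le. Qed.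

Lemma F_meet (x y : C) : F (x ∧ y) = F x ∧ F y.
Proof.
have [xy | nxy] := boolP (fle n cv x y).
  by have xy' := F_mono ((finalg_leE check x y).2 xy); rewrite ((finalg_leE check x y).2 xy).
have [yx | nyx] := boolP (fle n cv y x).
  have yx' := F_mono ((finalg_leE check y x).2 yx).
  by rewrite (meetC PK) (meetC PKC) ((finalg_leE check y x).2 yx).
apply: (le_anti PK); first by apply: (lexI PK); apply: F_mono; [apply: leIl | apply: leIr].
apply: (f_incomparable (t := (x : nat, y : nat, (x ∧ y) : nat))).
rewrite mem_filter val_meet; apply/andP; split; first by rewrite /= !ftabE ?mem_E // nxy nyx.
by apply/allpairsP; exists (x : nat, y : nat); rewrite !mem_E.
Qed.

Lemma F_inv (x : C) : F (x ') = (F x) '.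
Proof. by rewrite /F val_inv f_inv // -ltnS. Qed.

Lemma F_join (x y : C) : F (x ∨ y) = F x ∨ F y.
Proof.
by rewrite -(invK PKC (x ∨ y)) (invU PKC) F_inv F_meet !F_inv (invI PK) !(invK PK).
Qed.

Lemma F_le_inj (x y : C) : x ≤ y -> F x = F y -> x = y.
Proof.
move=> /(finalg_leE check) xy Fxy; case: (fle_pred xy) => [/ord_inj -> // | [c cy xc]].
by case: (f_cover_sep cy); rewrite -/(F y) -Fxy; apply: fle_f_le.
Qed.

Lemma F_inj : injective F.
Proof.
move=> x y Fxy; have Fm : F (x ∧ y) = F x by rewrite F_meet -Fxy (meetxx PK).
rewrite -(F_le_inj (leIl PKC x y) Fm); apply: F_le_inj (leIr PKC x y) _.
by rewrite Fm.
Qed.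

Lemma finalg_sub_iso : has_subalgebra_iso A C.
Proof.
have F1 : F ord_max = atop A by rewrite /F /= -(subn0 n) f_inv // f0 (inv0 PK).
exists (fun a => exists x, F x = a); split.
  split=> [_ _ [x <-] [y <-] | _ _ [x <-] [y <-] | _ [x <-] | |].
  - by exists (x ∧ y); rewrite F_meet.
  - by exists (x ∨ y); rewrite F_join.
  - by exists (x '); rewrite F_inv.
  - by exists ord0.
  - by exists ord_max.
exists F; split=> //; first exact: F_inj.
- exact: F_meet.
- exact: F_join.
- by split; [exact: F_inv | exact: f0 | exact: F1].
Qed.

End FiniteEmbedding.

Section EightElements.
Variables (A : alg) (a u v : A).
Hypotheses (PK : pseudo_kleene A) (au : a ≤ u) (uv : u ≤ v) (va : v ≤ a ').
Hypotheses (uu' : u ∧ u ' ≤ a) (uv' : u ∧ v ' ≤ a).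
Hypotheses (vv' : v ∧ v ' ≤ a) (vu' : v ∧ u ' ≤ a).
Hypotheses (ua : ~ u ≤ a) (vu : ~ v ≤ u) (v'a : ~ v ' ≤ a).

Lemma B8_sub_iso : ~ a ≤ abot A -> has_subalgebra_iso A B8.
Proof.
move=> a0; have av' : a ≤ v ' by rewrite -(invK PK a); apply: (le_inv PK).
have v'u' := le_inv PK uv; have u'a' := le_inv PK au.
(* the images of 0, z', x, y, y', x', z, 1 *)
pose f := nth (abot A) [:: abot A; a; u; v; v '; u '; a '; atop A].
apply: (@finalg_sub_iso A 7 _ f PK); first by vm_compute.
- by [].
- by case=> [|[|[|[|[|[|[|[|i]]]]]]]]; rewrite //= ?(invK PK) ?(inv0 PK) ?(inv1 PK).
- by apply: all_propP; do !split=> //; [apply: le0x | apply: lex1].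
- apply: all_propP; do !split; rewrite /f /=; try done;
    by move/(le_inv PK); rewrite ?(invK PK) ?(inv1 PK).
rewrite (_ : incomparable_meets _ _ = [:: (2, 4, 1); (2, 5, 1); (3, 4, 1); (3, 5, 1);
                                         (4, 2, 1); (4, 3, 1); (5, 2, 1); (5, 3, 1)]).
  by apply: all_propP; do !split; rewrite /f /=; lattice.
by vm_compute.
Qed.

Lemma B6_sub_iso : a ≤ abot A -> has_subalgebra_iso A B6.
Proof.
move=> a0; have v'u' := le_inv PK uv.
have u0 : ~ u ≤ abot A by move=> u0; apply/ua/(le_trans PK u0 (le0x PK a)).
have v'0 : ~ v ' ≤ abot A by move=> v'0; apply/v'a/(le_trans PK v'0 (le0x PK a)).
(* the images of 0, x, y, y', x', 1 *)
pose f := nth (abot A) [:: abot A; u; v; v '; u '; atop A].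
apply: (@finalg_sub_iso A 5 _ f PK); first by vm_compute.
- by [].
- by case=> [|[|[|[|[|[|i]]]]]]; rewrite //= ?(invK PK) ?(inv0 PK) ?(inv1 PK).
- by apply: all_propP; do !split=> //; [apply: le0x | apply: lex1 | apply: le0x | apply: lex1].
- apply: all_propP; do !split; rewrite /f /=; try done;
    by move/(le_inv PK); rewrite ?(invK PK) ?(inv1 PK).
rewrite (_ : incomparable_meets _ _ = [:: (1, 3, 0); (1, 4, 0); (2, 3, 0); (2, 4, 0);
                                         (3, 1, 0); (3, 2, 0); (4, 1, 0); (4, 2, 0)]).
  by apply: all_propP; do !split; rewrite /f /=; lattice.
by vm_compute.
Qed.

End EightElements.

Section SP1Failure.
Variables (A : alg) (x y : A).
Hypotheses (PK : pseudo_kleene A) (xy : x ≤ y) (hyp : x ' ∧ y = (x ∧ x ') ∨ (y ∧ y ')).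
Local Notation a := ((x ∧ x ') ∨ (y ∧ y ')).
Local Notation u := (x ∨ (y ∧ y ')).
Local Notation v := (y ∧ (x ∨ x ')).

Let yx' : y ∧ x ' ≤ a. Proof. by rewrite (meetC PK) hyp; apply: lexx. Qed.
Let uy : u ≤ y. Proof. lattice. Qed.
Let xu : x ≤ u. Proof. exact: leUl. Qed.
Let xv : x ≤ v. Proof. lattice. Qed.

Lemma sp1_a_le_u : a ≤ u.
Proof. lattice. Qed.

Lemma sp1_u_le_v : u ≤ v.
Proof. have yy'_xx' := kleene PK y x; lattice. Qed.

Lemma sp1_meets_le_a :
  [/\ u ∧ u ' ≤ a, u ∧ v ' ≤ a, v ∧ v ' ≤ a & v ∧ u ' ≤ a].
Proof.
have vy : v ≤ y by apply: leIl.
by split; apply: (le_trans PK _ yx'); apply: (leI2 PK) => //; apply: (le_inv PK).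
Qed.

Lemma sp1_v_le_a' : v ≤ a '.
Proof. lattice. Qed.

Let a_le_x' : a ≤ x '. Proof. by rewrite -hyp; apply: leIl. Qed.
Let a_le_y : a ≤ y. Proof. by rewrite -hyp; apply: leIr. Qed.

Lemma sp1_u_nle_a : ~ v ≤ u -> ~ u ≤ a.
Proof.
move=> vu ua; apply: vu; have xx' : x ≤ x ' := le_trans PK (le_trans PK xu ua) a_le_x'.
apply: (le_trans PK _ sp1_a_le_u); apply: (le_trans PK _ yx').
by apply: (leI2 PK); [apply: lexx | apply: (leUx PK) => //; apply: lexx].
Qed.

Lemma sp1_v'_nle_a : ~ v ≤ u -> ~ v ' ≤ a.
Proof.
move=> vu v'a; apply: vu; apply/(le_inv2 PK).
have y'y : y ' ≤ y.
  by apply: (le_trans PK _ a_le_y); apply: (le_trans PK _ v'a); apply/(le_inv PK)/(leIl PK).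
apply: (le_trans PK (_ : _ ≤ a)); first by apply: (le_trans PK _ yx'); lattice.
by rewrite -(invK PK a); apply/(le_inv PK)/sp1_v_le_a'.
Qed.

Lemma sp1_failure_sub_iso : ~ v ≤ u -> has_subalgebra_iso A B6 \/ has_subalgebra_iso A B8.
Proof.
move=> vu; have [uu' uv' vv' vu'] := sp1_meets_le_a.
have ua := sp1_u_nle_a vu; have v'a := sp1_v'_nle_a vu.
have au := sp1_a_le_u; have uv := sp1_u_le_v; have va := sp1_v_le_a'.
case: (classic (a ≤ abot A)) => a0.
  by left; apply: (@B6_sub_iso _ a u v).
by right; apply: (@B8_sub_iso _ a u v).
Qed.

End SP1Failure.

Lemma sp1_of_no_B6_B8 (A : alg) : pseudo_kleene A ->
  ~ has_subalgebra_iso A B6 -> ~ has_subalgebra_iso A B8 -> sp1_law A.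
Proof.
move=> PK noB6 noB8 x y xy hyp; apply: (le_anti PK); last exact: sp1_u_le_v.
by apply: NNPP => vu; case: (sp1_failure_sub_iso PK xy hyp vu).
Qed.

(** * Quotients onto B8* and B10 *)

Section QuotientByMap.
Variables (A C : alg) (phi : A -> C).
Hypotheses (PKA : pseudo_kleene A) (PKC : pseudo_kleene C).
Hypothesis phi_meet : forall s t, phi (s ∧ t) = phi s ∧ phi t.
Hypothesis phi_top : phi (atop A) = atop C.
Hypothesis phi_inv_le : forall s, phi s ≤ (phi (s ')) '.

Definition inv_compatible (s : A) : Prop := phi (s ') = (phi s) '.

Lemma phi_mono s t : s ≤ t -> phi s ≤ phi t.
Proof. by rewrite /ale => st; rewrite -phi_meet st. Qed.

Lemma phi_inv_le' s : phi (s ') ≤ (phi s) '.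
Proof. by rewrite -{2}(invK PKA s); apply: phi_inv_le. Qed.

Lemma phi_bot : phi (abot A) = abot C.
Proof.
apply: (le_anti PKC _ (le0x PKC _)); rewrite -(inv1 PKC) -phi_top -(inv0 PKA).
exact: phi_inv_le.
Qed.

Lemma inv_compatible_meet s t :
  inv_compatible s -> inv_compatible t -> inv_compatible (s ∧ t).
Proof.
move=> cs ct; apply: (le_anti PKC (phi_inv_le' _)).
rewrite phi_meet (invI PKC) -cs -ct.
by apply: (leUx PKC); apply: phi_mono; rewrite (invI PKA); [apply: leUl | apply: leUr].
Qed.

Lemma inv_compatible_inv s : inv_compatible s -> inv_compatible (s ').
Proof. by rewrite /inv_compatible (invK PKA) => ->; rewrite (invK PKC). Qed.

Lemma inv_compatible_join s t :
  inv_compatible s -> inv_compatible t -> inv_compatible (s ∨ t).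
Proof.
move=> cs ct; rewrite -(invK PKA (s ∨ t)) (invU PKA).
by apply/inv_compatible_inv/inv_compatible_meet; apply: inv_compatible_inv.
Qed.

Lemma inv_compatible_bot : inv_compatible (abot A).
Proof. by rewrite /inv_compatible (inv0 PKA) phi_top phi_bot (inv0 PKC). Qed.

Lemma inv_compatible_top : inv_compatible (atop A).
Proof. by rewrite -(inv0 PKA); apply/inv_compatible_inv/inv_compatible_bot. Qed.

Lemma phi_join s t : inv_compatible s -> inv_compatible t -> phi (s ∨ t) = phi s ∨ phi t.
Proof.
move=> cs ct; have cst := inv_compatible_join cs ct.
by rewrite -(invK PKC (phi (s ∨ t))) -cst (invU PKA) phi_meet cs ct (invI PKC) !(invK PKC).
Qed.

Lemma quotient_by_map : (forall c, exists2 s, inv_compatible s & phi s = c) ->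
  exists (S : A -> Prop) th, [/\ subalgebra S, congruence S th & quot_iso S th C].
Proof.
move=> onto; exists inv_compatible, (fun s t => phi s = phi t); split.
- split; [exact: inv_compatible_meet | exact: inv_compatible_join |
          exact: inv_compatible_inv | exact: inv_compatible_bot | exact: inv_compatible_top].
- split.
  + by [].
  + by move=> x y _ _ ->.
  + by move=> x y z _ _ _ -> ->.
  + by move=> x y u v cx cy cu cv exy euv; rewrite !phi_meet !phi_join // exy euv.
  + by move=> x y cx cy exy; rewrite cx cy exy.
- exists phi; split.
  + by [].
  + by move=> c; have [s cs <-] := onto c; exists s.
  + by move=> x y _ _; apply: phi_meet.
  + exact: phi_join.
  + by split; [move=> x -> | exact: phi_bot | exact: phi_top].
Qed.

End QuotientByMap.

Definition generated_by (C : alg) (G : C -> Prop) : Prop :=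
  forall P : C -> Prop,
    (forall x y, P x -> P y -> P (x ∧ y)) -> (forall x y, P x -> P y -> P (x ∨ y)) ->
    (forall x, P x -> P (x ')) -> (forall g, G g -> P g) -> forall c, P c.

Definition asbool (P : Prop) : bool := if excluded_middle_informative P then true else false.

Lemma asboolP (P : Prop) : reflect P (asbool P).
Proof. by rewrite /asbool; case: excluded_middle_informative => ?; constructor. Qed.

Section ProfileMap.
Variables (A C : alg) (m : nat) (b : nat -> A) (lab : nat -> C).
Variable rules : seq (nat * seq nat).
Hypotheses (PKA : pseudo_kleene A) (PKC : pseudo_kleene C).

Definition profile (s : A) : bitseq := mkseq (fun k => asbool (b k ≤ s)) m.
Definition label_join (p : bitseq) : C :=
  foldr (@ajoin C) (abot C) [seq lab k | k <- iota 0 m & nth false p k].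
Definition rule_closed (p : bitseq) : bool :=
  all (fun r => all (nth false p) r.2 ==> nth false p r.1) rules.
Definition profile_meet (p q : bitseq) : bitseq :=
  mkseq (fun k => nth false p k && nth false q k) m.
Definition orthogonal (p q : bitseq) : Prop :=
  forall k h, nth false p k -> nth false q h -> lab k ≤ (lab h) '.

Hypothesis rules_sound :
  forall r, r \in rules -> r.1 < m /\ b r.1 ≤ foldr (@ajoin A) (abot A) (map b r.2).
Hypothesis b_sep : forall k h, k < m -> h < m -> b k ≤ (b h) ' -> lab k ≤ (lab h) '.
Hypothesis label_join_meet : forall p q, size p = m -> size q = m ->
  rule_closed p -> rule_closed q -> label_join (profile_meet p q) = label_join p ∧ label_join q.
Hypothesis label_join_orth : forall p q, size p = m -> size q = m ->
  rule_closed p -> rule_closed q -> orthogonal p q -> label_join p ≤ (label_join q) '.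
Hypothesis label_join_all : label_join (nseq m true) = atop C.

Local Notation phi s := (label_join (profile s)).

Lemma size_profile s : size (profile s) = m. Proof. exact: size_mkseq. Qed.

Lemma nth_profile s k : nth false (profile s) k = (k < m) && asbool (b k ≤ s).
Proof. by case: ltnP => km; [rewrite nth_mkseq | rewrite nth_default ?size_profile]. Qed.

Lemma profile_meetE s t : profile (s ∧ t) = profile_meet (profile s) (profile t).
Proof.
apply: (@eq_from_nth _ false); rewrite ?size_profile ?size_mkseq // => k km.
rewrite nth_profile /profile_meet nth_mkseq // !nth_profile km /=.
apply/asboolP/andP => [/(lexIP PKA)[ks kt] | [/asboolP ks /asboolP kt]].
  by split; apply/asboolP.
exact/(lexIP PKA).
Qed.

Lemma rule_closed_profile s : rule_closed (profile s).
Proof.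
apply/allP => r /rules_sound[rm br]; apply/implyP => /allP rs.
rewrite nth_profile rm; apply/asboolP; apply: (le_trans PKA br); apply: (join_map_le PKA).
by move=> l /rs; rewrite nth_profile => /andP[_ /asboolP].
Qed.

Lemma lab_le_label_join p k : k < m -> nth false p k -> lab k ≤ label_join p.
Proof. by move=> km pk; apply: (le_join_map PKC); rewrite mem_filter pk mem_iota. Qed.

Lemma profile_phi_meet s t : phi (s ∧ t) = phi s ∧ phi t.
Proof. by rewrite profile_meetE label_join_meet ?size_profile ?rule_closed_profile. Qed.

Lemma profile_phi_top : phi (atop A) = atop C.
Proof.
rewrite -label_join_all; congr label_join.
apply: (@eq_from_nth _ false); rewrite ?size_profile ?size_nseq // => k km.
by rewrite nth_profile nth_nseq km; apply/asboolP/lex1.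
Qed.

Lemma profile_phi_inv_le s : phi s ≤ (phi (s ')) '.
Proof.
apply: label_join_orth; rewrite ?size_profile ?rule_closed_profile // => k h.
rewrite !nth_profile => /andP[km /asboolP ks] /andP[hm /asboolP hs].
by apply: b_sep => //; apply: (le_trans PKA ks); apply/(le_inv2 PKA); rewrite (invK PKA).
Qed.

Lemma profile_generator g h : g < m -> h < m -> lab h = (lab g) ' -> b h ≤ (b g) ' ->
  phi (b g) = lab g /\ inv_compatible (fun s => phi s) (b g).
Proof.
move=> gm hm hg bhg.
have lo : lab g ≤ phi (b g).
  by apply: (lab_le_label_join gm); rewrite nth_profile gm; apply/asboolP/lexx.
have lo' : lab h ≤ phi ((b g) ').
  by apply: (lab_le_label_join hm); rewrite nth_profile hm; apply/asboolP.
have hi : phi (b g) ≤ lab g.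
  apply: (le_trans PKC (profile_phi_inv_le _)).
  by rewrite -(invK PKC (lab g)) -hg; apply: (le_inv PKC).
have e : phi (b g) = lab g := le_anti PKC hi lo.
split=> //; rewrite /inv_compatible e -hg; apply: (le_anti PKC _ lo').
by rewrite hg -e; apply: (phi_inv_le' PKA profile_phi_inv_le).
Qed.

Lemma profile_quotient (gens : seq (nat * nat)) :
  (forall gh, gh \in gens ->
     [/\ gh.1 < m, gh.2 < m, lab gh.2 = (lab gh.1) ' & b gh.2 ≤ (b gh.1) ']) ->
  generated_by (fun c => exists2 gh, gh \in gens & c = lab gh.1) ->
  exists (S : A -> Prop) th, [/\ subalgebra S, congruence S th & quot_iso S th C].
Proof.
have cI := inv_compatible_meet PKA PKC profile_phi_meet profile_phi_inv_le.
have cU := inv_compatible_join PKA PKC profile_phi_meet profile_phi_inv_le.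
have cN := @inv_compatible_inv A C (fun s => phi s) PKA PKC.
move=> gensP gen.
apply: (quotient_by_map PKA PKC profile_phi_meet profile_phi_top profile_phi_inv_le).
apply: gen.
- by move=> _ _ [s cs <-] [t ct <-]; exists (s ∧ t); [apply: cI | apply: profile_phi_meet].
- move=> _ _ [s cs <-] [t ct <-]; exists (s ∨ t); first exact: cU.
  exact: (phi_join PKA PKC profile_phi_meet profile_phi_inv_le).
- by move=> _ [s cs <-]; exists (s '); [apply: cN | apply: cs].
- move=> _ [[g h] /gensP[gm hm hg bhg] ->].
  by have [e c] := profile_generator gm hm hg bhg; exists (b g).
Qed.

End ProfileMap.

Fixpoint bitseqs (m : nat) : seq bitseq :=
  if m is m'.+1 then [seq true :: s | s <- bitseqs m'] ++ [seq false :: s | s <- bitseqs m']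
  else [:: [::]].

Lemma bitseqsP m s : size s = m -> s \in bitseqs m.
Proof.
elim: m s => [|m IH] [|c s] //= [/IH sm].
by rewrite mem_cat; case: c; rewrite (map_f _ sm) ?orbT.
Qed.

Section FiniteGeneration.
Variables (n : nat) (cv : seq (nat * nat)).
Local Notation C := (finalg n cv).
Local Notation E := (iota 0 n.+1).

Definition closure_step (le : rel nat) (l : seq nat) : seq nat :=
  undup (l ++ [seq meet_by n le x y | x <- l, y <- l] ++
             [seq join_by n le x y | x <- l, y <- l] ++ [seq n - x | x <- l]).

Definition generates (le : rel nat) (G : seq nat) : bool :=
  all (fun g => g <= n) G && all (fun c => c \in iter n (closure_step le) G) E.

Lemma finalg_generated G : generates (ftab n cv) G -> generated_by (fun c : C => (c : nat) \in G).
Proof.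
case/andP => /allP Gn /allP GE P PI PU PN PG c.
have val_P (x : nat) (d : C) : x = d -> P d -> x <= n /\ P (inord x).
  by move=> -> Pd; rewrite inord_val -ltnS ltn_ord.
suff iterP i x : x \in iter i (closure_step (ftab n cv)) G -> x <= n /\ P (inord x).
  by have [_] := iterP n c (GE _ (mem_E c)); rewrite inord_val.
elim: i x => [|i IH] x /=.
  move=> xG; have xn := Gn x xG.
  by apply: (val_P x (inord x)); [rewrite inordK | apply: PG; rewrite inordK].
rewrite mem_undup !mem_cat => /or4P[/IH // | | | ].
- case/allpairsP => -[y z] /= [/IH[yn Py] /IH[zn Pz] ->].
  by apply: (val_P _ ((inord y : C) ∧ inord z)); [rewrite val_meet !inordK | apply: PI].
- case/allpairsP => -[y z] /= [/IH[yn Py] /IH[zn Pz] ->].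
  by apply: (val_P _ ((inord y : C) ∨ inord z)); [rewrite val_join !inordK | apply: PU].
- case/mapP => y /IH[yn Py] ->.
  by apply: (val_P _ ((inord y : C) ')); [rewrite val_inv inordK | apply: PN].
Qed.

End FiniteGeneration.

Section FiniteProfileQuotient.
Variables (n : nat) (cv : seq (nat * nat)) (m : nat) (labn : seq nat).
Variables (rules : seq (nat * seq nat)) (gens : seq (nat * nat)).
Local Notation C := (finalg n cv).
Local Notation labv k := (nth 0 labn k).

Definition label_joinn (le : rel nat) (p : bitseq) : nat :=
  foldr (join_by n le) 0 [seq labv k | k <- iota 0 m & nth false p k].

Definition orthogonaln (le : rel nat) (p q : bitseq) : bool :=
  all (fun k => all (fun h => nth false p k && nth false q h ==>
         (meet_by n le (labv k) (n - labv h) == labv k)) (iota 0 m)) (iota 0 m).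

(* [pJ] and [qJ] pair a profile with its label join. *)
Definition profile_pair_ok (le : rel nat) (pJ qJ : bitseq * nat) : bool :=
  (label_joinn le (profile_meet m pJ.1 qJ.1) == meet_by n le pJ.2 qJ.2) &&
  (orthogonaln le pJ.1 qJ.1 ==> (meet_by n le pJ.2 (n - qJ.2) == pJ.2)).

Definition profile_check (le : rel nat) : bool :=
  let T := [seq (p, label_joinn le p) | p <- bitseqs m & rule_closed rules p] in
  [&& all (fun l => l <= n) labn, all (fun r => r.1 < m) rules,
      all (fun gh => [&& gh.1 < m, gh.2 < m & labv gh.2 == n - labv gh.1]) gens,
      label_joinn le (nseq m true) == n,
      all (fun pJ => all (profile_pair_ok le pJ) T) T
    & generates n le [seq labv gh.1 | gh <- gens]].

(* Orthogonality is symmetric, so only the pairs with [k <= h] are listed. *)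
Definition bad_pairs (le : rel nat) : seq (nat * nat) :=
  [seq kh <- [seq (k, h) | k <- iota 0 m, h <- iota k (m - k)]
     | ~~ (meet_by n le (labv kh.1) (n - labv kh.2) == labv kh.1)].

Variables (A : alg) (b : nat -> A).
Hypotheses (PK : pseudo_kleene A) (check : finalg_check n cv).
Hypothesis pcheck : profile_check (ftab n cv).
Hypothesis rules_sound :
  forall r, r \in rules -> b r.1 ≤ foldr (@ajoin A) (abot A) (map b r.2).
Hypothesis b_sep : forall kh, kh \in bad_pairs (ftab n cv) -> ~ b kh.1 ≤ (b kh.2) '.
Hypothesis gens_orth : forall gh, gh \in gens -> b gh.2 ≤ (b gh.1) '.

Lemma finalg_profile_quotient :
  exists (S : A -> Prop) th, [/\ subalgebra S, congruence S th & quot_iso S th C].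
Proof.
case/and5P: pcheck => /allP labn_le /allP rules_m /allP gens_ok /eqP J_all /andP[/allP J_ok gen].
have PKC := finalg_pseudo_kleene check.
pose lab k : C := inord (labv k).
have val_lab k : lab k = labv k :> nat.
  rewrite inordK // ltnS; case: (ltnP k (size labn)) => [km | /(nth_default 0) -> //].
  exact/labn_le/mem_nth.
have val_J p : label_join m lab p = label_joinn (ftab n cv) p :> nat.
  rewrite /label_join /label_joinn; elim: [seq k <- iota 0 m | nth false p k] => //= k l IH.
  by rewrite val_join val_lab IH.
have J_ok' p q : size p = m -> size q = m -> rule_closed rules p -> rule_closed rules q ->
    profile_pair_ok (ftab n cv) (p, label_joinn (ftab n cv) p) (q, label_joinn (ftab n cv) q).
  have inT r : size r = m -> rule_closed rules r -> (r, label_joinn (ftab n cv) r) \in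
      [seq (p, label_joinn (ftab n cv) p) | p <- bitseqs m & rule_closed rules p].
    by move=> sr cr; apply: map_f; rewrite mem_filter cr bitseqsP.
  by move=> sp sq cp cq; apply: (allP (J_ok _ (inT p sp cp))); apply: inT.
apply: (@profile_quotient A C m b lab rules PK PKC _ _ _ _ _ gens).
- by move=> r rr; split; [apply: rules_m | apply: rules_sound].
- have sep k h : k <= h -> h < m -> b k ≤ (b h) ' -> lab k ≤ (lab h) '.
    move=> kh hm bkh; apply/finalg_leP; rewrite val_inv !val_lab.
    apply: contraT => bad; case: (b_sep (kh := (k, h))) => //.
    have km : k < m := leq_ltn_trans kh hm.
    rewrite mem_filter bad; apply/allpairsPdep; exists k, h.
    by rewrite !mem_iota subnKC ?kh ?hm ?km // ltnW.
  move=> k h km hm bkh; case: (leqP k h) => [kh | /ltnW hk]; first exact: sep.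
  apply/(le_inv2 PKC); rewrite (invK PKC); apply: sep hk km _.
  by apply/(le_inv2 PK); rewrite (invK PK).
- move=> p q sp sq cp cq; apply: ord_inj; rewrite val_meet !val_J.
  by case/andP: (J_ok' p q sp sq cp cq) => /eqP.
- move=> p q sp sq cp cq orth; apply/finalg_leP; rewrite val_inv !val_J.
  case/andP: (J_ok' p q sp sq cp cq) => _ /implyP; apply.
  apply/allP => k _; apply/allP => h _; apply/implyP => /andP[pk qh].
  by have /finalg_leP := orth k h pk qh; rewrite val_inv !val_lab.
- by apply: ord_inj; rewrite val_J J_all.
- move=> gh ghs; have /and3P[g1 g2 /eqP lab2] := gens_ok gh ghs.
  by split=> //; [apply: ord_inj; rewrite val_inv !val_lab | apply: gens_orth].
- move=> P PI PU PN PG; apply: (finalg_generated gen) => // c /mapP[gh ghs e].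
  by apply: PG; exists gh => //; apply: ord_inj; rewrite val_lab.
Qed.

End FiniteProfileQuotient.

Section B8sQuotient.
Variables (A : alg) (u v : A).
Hypotheses (PK : pseudo_kleene A) (uv : u ≤ v) (uu' : u ≤ u ').
Hypothesis fail : ~ v ∧ (u ∨ v ') ≤ u ∨ (v ∧ v ').

Lemma B8s_quotient :
  exists (S : A -> Prop) th, [/\ subalgebra S, congruence S th & quot_iso S th B8s].
Proof.
have v'u' := le_inv PK uv.
(* labelled by x, y, z, y', x' of B8* *)
pose b := nth (abot A) [:: u ∨ (v ∧ v '); v '; v ∧ (u ∨ v '); v; (u ∨ (v ∧ v ')) '].
apply: (@finalg_profile_quotient 7 _ 5 [:: 1; 2; 3; 5; 6]
  [:: (0, [:: 2]); (0, [:: 3]); (0, [:: 4]); (2, [:: 3]); (2, [:: 4]); (1, [:: 4]);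
      (2, [:: 0; 1]); (4, [:: 1; 3])] [:: (0, 4); (3, 1)] A b PK).
- by vm_compute.
- by vm_compute.
- by apply: all_propP; rewrite /b /=; do !split; lattice.
- rewrite (_ : bad_pairs _ _ _ _ = [:: (0, 3); (1, 1); (1, 4); (2, 3); (2, 4);
                                      (3, 3); (3, 4); (4, 4)]).
    apply: all_propP; rewrite /b /=; do !split; move=> H; apply: fail;
      have H' := le_inv PK H; rewrite ?(invU PK, invI PK, invK PK) in H H'; lattice.
  by vm_compute.
- by apply: all_propP; rewrite /b /= ?(invK PK); do !split; apply: lexx.
Qed.

End B8sQuotient.

Section B10Quotient.
Variables (A : alg) (x y : A).
Hypotheses (PK : pseudo_kleene A) (xy : x ≤ y).
Hypothesis om : forall u v : A, u ≤ v -> u ≤ u ' -> v ∧ (u ∨ v ') ≤ u ∨ (v ∧ v ').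
Local Notation a := ((x ∧ x ') ∨ (y ∧ y ')).
Local Notation t := (x ' ∧ y).
Hypothesis fail : ~ t ∧ t ' ≤ a.

Let y'x' : y ' ≤ x '. Proof. exact: le_inv. Qed.

Lemma B10_y_meet : y ∧ (y ' ∨ a) ≤ a.
Proof. have h : y ∧ ((x ∧ x ') ∨ y ') ≤ a by apply: om; lattice. lattice. Qed.

Lemma B10_x'_meet : x ' ∧ (x ∨ a) ≤ a.
Proof.
have h : x ' ∧ ((y ∧ y ') ∨ x '') ≤ (y ∧ y ') ∨ (x ' ∧ x '') by apply: om; lattice.
rewrite (invK PK) in h; apply: (le_trans PK _ (le_trans PK h _)); lattice.
Qed.

Lemma B10_xa_meet : (x ∨ a) ∧ (x ∨ a) ' ≤ a.
Proof. have xm := B10_x'_meet; have k := kleene PK y x; lattice. Qed.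

Lemma B10_ya_meet : (y ' ∨ a) ∧ (y ' ∨ a) ' ≤ a.
Proof. have ym := B10_y_meet; have k := kleene PK x y; lattice. Qed.

Lemma B10_a'_le_x : a ' ≤ (x ∨ a) ∨ (x ∨ a) '.
Proof. by have := le_inv PK B10_xa_meet; rewrite (invI PK) (invK PK) (joinC PK ((x ∨ a) ')). Qed.

Lemma B10_a'_le_y : a ' ≤ (y ' ∨ a) ' ∨ (y ' ∨ a).
Proof. by have := le_inv PK B10_ya_meet; rewrite (invI PK) (invK PK). Qed.

Lemma B10_quotient :
  exists (S : A -> Prop) th, [/\ subalgebra S, congruence S th & quot_iso S th B10].
Proof.
(* labelled by x, y', m, y, x' of B10 *)
pose b := nth (abot A) [:: x ∨ a; y ' ∨ a; t ∧ t '; (y ' ∨ a) '; (x ∨ a) '].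
apply: (@finalg_profile_quotient 9 _ 5 [:: 1; 2; 3; 7; 8]
  [:: (0, [:: 3]); (2, [:: 3]); (1, [:: 4]); (2, [:: 4]); (2, [:: 0; 1]); (3, [:: 0; 4]);
      (4, [:: 3; 1])] [:: (0, 4); (3, 1)] A b PK).
- by vm_compute.
- by vm_compute.
- have kx := kleene PK x y; have ky := kleene PK y x.
  have ax := le_trans PK (le_inv PK (leUr PK (y ') a)) B10_a'_le_x.
  have ay := le_trans PK (le_inv PK (leUr PK x a)) B10_a'_le_y.
  rewrite ?(invU PK, invI PK, invK PK) in ax ay.
  by apply: all_propP; rewrite /b /=; do !split; lattice.
- have ym := B10_y_meet; have xm := B10_x'_meet.
  rewrite (_ : bad_pairs _ _ _ _ = [:: (0, 0); (0, 3); (1, 1); (1, 4); (2, 3);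
                                     (2, 4); (3, 3); (3, 4); (4, 4)]).
    apply: all_propP; rewrite /b /=; do !split; move=> H; apply: fail;
      have H' := le_inv PK H; rewrite ?(invU PK, invI PK, invK PK) in H H'; lattice.
  by vm_compute.
- by apply: all_propP; rewrite /b /= ?(invK PK); do !split; apply: lexx.
Qed.

End B10Quotient.

Lemma sp2_of_no_quotients (A : alg) : pseudo_kleene A ->
  ~ (exists (S : A -> Prop) (th : A -> A -> Prop),
       [/\ subalgebra S, congruence S th & (quot_iso S th B8s \/ quot_iso S th B10)]) ->
  sp2_law A.
Proof.
move=> PK noQ x y xy; have y'x' := le_inv PK xy.
apply: (le_anti PK); first lattice.
apply: NNPP => fail; apply: noQ.
case: (classic (exists u v : A,
                 [/\ u ≤ v, u ≤ u ' & ~ v ∧ (u ∨ v ') ≤ u ∨ (v ∧ v ')]))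
  => [[u [v [uv uu' om_fail]]] | om].
  by have [S [th [? ? ?]]] := B8s_quotient PK uv uu' om_fail; exists S, th; split=> //; left.
have {}om (u v : A) : u ≤ v -> u ≤ u ' -> v ∧ (u ∨ v ') ≤ u ∨ (v ∧ v ').
  by move=> uv uu'; apply: NNPP => om_fail; apply: om; exists u, v.
by have [S [th [? ? ?]]] := B10_quotient PK xy om fail; exists S, th; split=> //; right.
Qed.

Theorem theorem4p1 (A : alg) :
  pseudo_kleene A ->
  (super_paraorthomodular A <->
   [/\ ~ has_subalgebra_iso A B6,
       ~ has_subalgebra_iso A B8 &
       ~ (exists (S : A -> Prop) (th : A -> A -> Prop),
            [/\ subalgebra S, congruence S th &
                (quot_iso S th B8s \/ quot_iso S th B10)])]).
Proof.
move=> PK; split=> [[sp1 sp2] | [noB6 noB8 noQ]].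
  split.
  - by move/(sub_iso_sp1 sp1); apply: B6_not_sp1.
  - by move/(sub_iso_sp1 sp1); apply: B8_not_sp1.
  - case=> S [th [subS _ [quot | quot]]].
      exact: B8s_not_sp2 (quot_iso_sp2 PK sp2 subS quot).
    exact: B10_not_sp2 (quot_iso_sp2 PK sp2 subS quot).
split; [exact: sp1_of_no_B6_B8 | exact: sp2_of_no_quotients].
Qed.
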